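(* Let $X$ be a finite set, $F(X)$ the free lattice over $X$, $R\subseteq F(X)\times F(X)$ a finite set, and $\rho$ the congruence of $F(X)$ generated by $R$. The following are equivalent: (1) $F(X)/\rho$ is bounded. (2) $\rho$ is finitely generated as a sublattice of $F(X)\times F(X)$. (3) For every $u$ that is an element of $X$ or a subterm of a lattice term (over $X$) occurring in a pair of $R$, the class $u/\rho$ has both a least and a greatest element in $F(X)$.
   Context: A finitely generated lattice $D$ is lower bounded if there exist a finite set $Y$ and an epimorphism $f\colon F(Y)\to D$ such that for each $d\in D$ the preimage $f^{-1}(d)$ has a least element; upper bounded if there is such an epimorphism with every preimage having a greatest element; bounded if it is both lower and upper bounded. Elements of $F(X)$ are represented by lattice terms over $X$; the elements of $R$ are given as pairs of terms. *)

From mathcomp Require Import all_boot.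
From Stdlib Require Import List.
Set Implicit Arguments. Unset Strict Implicit. Unset Printing Implicit Defensive.

Inductive term (X : Type) : Type :=
| Var of X
| Join of term X & term X
| Meet of term X & term X.
Arguments Var {X} _.
Arguments Join {X} _ _.
Arguments Meet {X} _ _.

(** Terms modulo [cg nil] form the
    free lattice F(X); [cg R] (which contains [cg nil]) is then, read on
    representatives, the congruence rho of F(X) generated by R, and terms
    modulo [cg R] form F(X)/rho. *)
Inductive cg (X : Type) (R : list (term X * term X)) : term X -> term X -> Prop :=
| cg_base a b : List.In (a, b) R -> cg R a b
| cg_refl a : cg R a a
| cg_sym a b : cg R a b -> cg R b a
| cg_trans a b c : cg R a b -> cg R b c -> cg R a c
| cg_join a a' b b' : cg R a a' -> cg R b b' -> cg R (Join a b) (Join a' b')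
| cg_meet a a' b b' : cg R a a' -> cg R b b' -> cg R (Meet a b) (Meet a' b')
| cg_join_comm a b : cg R (Join a b) (Join b a)
| cg_meet_comm a b : cg R (Meet a b) (Meet b a)
| cg_join_assoc a b c : cg R (Join a (Join b c)) (Join (Join a b) c)
| cg_meet_assoc a b c : cg R (Meet a (Meet b c)) (Meet (Meet a b) c)
| cg_join_idem a : cg R (Join a a) a
| cg_meet_idem a : cg R (Meet a a) a
| cg_absorb_jm a b : cg R (Join a (Meet a b)) a
| cg_absorb_mj a b : cg R (Meet a (Join a b)) a.

Definition feq (X : Type) : term X -> term X -> Prop := cg (@nil (term X * term X)).

Definition fle (X : Type) (s t : term X) : Prop := feq (Meet s t) s.

(** A lattice presented as a setoid: carrier T, equality E, join jn, meet mt.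
    A lattice homomorphism F(Y) -> (T,E,jn,mt), given on representatives. *)
Definition is_hom (Y T : Type) (E : T -> T -> Prop) (jn mt : T -> T -> T)
  (f : term Y -> T) : Prop :=
  (forall s t, feq s t -> E (f s) (f t)) /\
  (forall s t, E (f (Join s t)) (jn (f s) (f t))) /\
  (forall s t, E (f (Meet s t)) (mt (f s) (f t))).

Definition is_epi (Y T : Type) (E : T -> T -> Prop) (jn mt : T -> T -> T)
  (f : term Y -> T) : Prop :=
  is_hom E jn mt f /\ forall d : T, exists s : term Y, E (f s) d.

Definition lower_bounded (T : Type) (E : T -> T -> Prop) (jn mt : T -> T -> T) : Prop :=
  exists (Y : finType) (f : term Y -> T), is_epi E jn mt f /\
    forall d : T, exists s0 : term Y, E (f s0) d /\
      forall s : term Y, E (f s) d -> fle s0 s.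

Definition upper_bounded (T : Type) (E : T -> T -> Prop) (jn mt : T -> T -> T) : Prop :=
  exists (Y : finType) (f : term Y -> T), is_epi E jn mt f /\
    forall d : T, exists s0 : term Y, E (f s0) d /\
      forall s : term Y, E (f s) d -> fle s s0.

Definition bounded (T : Type) (E : T -> T -> Prop) (jn mt : T -> T -> T) : Prop :=
  lower_bounded E jn mt /\ upper_bounded E jn mt.

Definition quotient_bounded (X : Type) (R : list (term X * term X)) : Prop :=
  bounded (cg R) (@Join X) (@Meet X).

Inductive gen_sub (X : Type) (S : list (term X * term X)) : term X * term X -> Prop :=
| gs_base p : List.In p S -> gen_sub S p
| gs_join p q : gen_sub S p -> gen_sub S q -> gen_sub S (Join p.1 q.1, Join p.2 q.2)
| gs_meet p q : gen_sub S p -> gen_sub S q -> gen_sub S (Meet p.1 q.1, Meet p.2 q.2).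

Definition cong_fin_gen (X : Type) (R : list (term X * term X)) : Prop :=
  exists S : list (term X * term X),
    (forall p, List.In p S -> cg R p.1 p.2) /\
    (forall a b, cg R a b ->
       exists a' b', gen_sub S (a', b') /\ feq a a' /\ feq b b').

Inductive subterm (X : Type) (u : term X) : term X -> Prop :=
| st_refl : subterm u u
| st_joinl a b : subterm u a -> subterm u (Join a b)
| st_joinr a b : subterm u b -> subterm u (Join a b)
| st_meetl a b : subterm u a -> subterm u (Meet a b)
| st_meetr a b : subterm u b -> subterm u (Meet a b).

Definition class_has_least (X : Type) (R : list (term X * term X)) (u : term X) : Prop :=
  exists m, cg R m u /\ forall v, cg R v u -> fle m v.
Definition class_has_greatest (X : Type) (R : list (term X * term X)) (u : term X) : Prop :=
  exists m, cg R m u /\ forall v, cg R v u -> fle v m.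

(** We show (1) <-> (2) and (2) <-> (3) through the auxiliary condition
  (3'): every class u/rho has a least and a greatest element.

  The order [qle R] of F(X)/rho is characterized
    by Whitman's sequent calculus in which cuts are allowed only through a
    fixed finite set C of terms; cuts are admissible as soon as C contains a
    side of each pair of R.  With R = C = [] this yields Whitman's conditions
    for the free lattice.
  - Least preimages.  Using Whitman's conditions, a substitution
    F(B + N) -> F(B) fixing B (N finite) has a lower adjoint [lower].  It
    follows that if one epimorphism F(Y) -> L has least preimages, then so
    does every epimorphism F(X) -> L with X finite.  Duality (exchanging joins
    and meets) turns every statement about least elements into one about
    greatest elements.
  - (1) -> (3') and (2) -> (3') apply this transfer to the identity
    F(X) -> F(X)/rho, resp. to the evaluation of the generating pairs;
    (3') -> (1) is immediate with the identity map.
  - (3) -> (2): with lo u / hi u the least / greatest elements of the classes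
    of the cut terms (variables and left sides of R), an explicit
    homomorphic approximation P <= a <= Q built from lo and hi gives, for
    every (a, b) in rho, a = (a /\ Q) \/ (b /\ P) and b = (a /\ P) \/ (b /\ Q)
    inside the sublattice generated by the pairs (x, x), (lo u, hi u), (hi u, lo u). *)

From mathcomp Require Import all_boot.
From Stdlib Require Import List ClassicalEpsilon.
Set Implicit Arguments. Unset Strict Implicit.
Set Bullet Behavior "Strict Subproofs".

#[local] Hint Resolve cg_refl cg_sym : core.

Definition bigmeet (A X : Type) (g : A -> term X) (c : term X) (l : list A) : term X :=
  fold_right (fun n acc => Meet (g n) acc) c l.

Definition bigjoin (A X : Type) (g : A -> term X) (c : term X) (l : list A) : term X :=
  fold_right (fun n acc => Join (g n) acc) c l.

Lemma cg_map (A B : Type) (R : list (term A * term A)) (R' : list (term B * term B))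
  (f : term A -> term B) :
  (forall a b, In (a, b) R -> cg R' (f a) (f b)) ->
  (forall a b, f (Join a b) = Join (f a) (f b)) ->
  (forall a b, f (Meet a b) = Meet (f a) (f b)) ->
  forall a b, cg R a b -> cg R' (f a) (f b).
Proof.
  intros HR HJ HM a b. induction 1; repeat (rewrite HJ || rewrite HM); eauto using cg.
Qed.

Section QuotientOrder.
Variables (X : Type) (R : list (term X * term X)).

Definition qle (a b : term X) : Prop := cg R (Meet a b) a.

Lemma qle_refl a : qle a a.
Proof. apply cg_meet_idem. Qed.

Lemma qle_trans a b c : qle a b -> qle b c -> qle a c.
Proof.
  unfold qle; intros Hab Hbc.
  apply cg_trans with (Meet (Meet a b) c); [apply cg_meet; auto|].
  apply cg_trans with (Meet a (Meet b c)); [apply cg_sym, cg_meet_assoc|].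
  apply cg_trans with (Meet a b); [apply cg_meet|]; auto.
Qed.

Lemma qle_meet_l a b : qle (Meet a b) a.
Proof.
  unfold qle. apply cg_trans with (Meet a (Meet a b)); [apply cg_meet_comm|].
  apply cg_trans with (Meet (Meet a a) b); [apply cg_meet_assoc|].
  apply cg_meet; [apply cg_meet_idem | auto].
Qed.

Lemma qle_meet_r a b : qle (Meet a b) b.
Proof.
  unfold qle. apply cg_trans with (Meet a (Meet b b)); [apply cg_sym, cg_meet_assoc|].
  apply cg_meet; [auto | apply cg_meet_idem].
Qed.

Lemma qle_meet_glb a b c : qle c a -> qle c b -> qle c (Meet a b).
Proof.
  unfold qle; intros Hca Hcb.
  apply cg_trans with (Meet (Meet c a) b); [apply cg_meet_assoc|].
  apply cg_trans with (Meet c b); [apply cg_meet|]; auto.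
Qed.

Lemma qle_join_l a b : qle a (Join a b).
Proof. apply cg_absorb_mj. Qed.

Lemma qle_join_r a b : qle b (Join a b).
Proof.
  unfold qle. apply cg_trans with (Meet b (Join b a)); [apply cg_meet; [|apply cg_join_comm]|];
    auto using cg_absorb_mj.
Qed.

Lemma join_of_qle a c : qle a c -> cg R (Join a c) c.
Proof.
  unfold qle; intro Hac.
  apply cg_trans with (Join (Meet a c) c); [apply cg_join; auto|].
  apply cg_trans with (Join c (Meet c a)); [|apply cg_absorb_jm].
  apply cg_trans with (Join c (Meet a c));
    [apply cg_join_comm | apply cg_join; auto using cg_meet_comm].
Qed.

Lemma qle_of_join a c : cg R (Join a c) c -> qle a c.
Proof.
  unfold qle; intro Hac.
  apply cg_trans with (Meet a (Join a c)); [apply cg_meet; auto | apply cg_absorb_mj].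
Qed.

Lemma qle_join_lub a b c : qle a c -> qle b c -> qle (Join a b) c.
Proof.
  intros Hac Hbc. apply qle_of_join.
  apply cg_trans with (Join a (Join b c)); [apply cg_sym, cg_join_assoc|].
  apply cg_trans with (Join a c); [apply cg_join|]; auto using join_of_qle.
Qed.

Lemma qle_of_cg a b : cg R a b -> qle a b.
Proof.
  unfold qle; intro Hab.
  apply cg_trans with (Meet a a); [apply cg_meet; auto | apply cg_meet_idem].
Qed.

Lemma qle_antisym a b : qle a b -> qle b a -> cg R a b.
Proof.
  unfold qle; intros Hab Hba.
  apply cg_trans with (Meet a b); [auto|].
  apply cg_trans with (Meet b a); [apply cg_meet_comm | exact Hba].
Qed.

Lemma qle_join_mono a a' b b' : qle a a' -> qle b b' -> qle (Join a b) (Join a' b').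
Proof.
  intros Ha Hb. apply qle_join_lub.
  - apply qle_trans with a'; [exact Ha | apply qle_join_l].
  - apply qle_trans with b'; [exact Hb | apply qle_join_r].
Qed.

Lemma qle_meet_mono a a' b b' : qle a a' -> qle b b' -> qle (Meet a b) (Meet a' b').
Proof.
  intros Ha Hb. apply qle_meet_glb.
  - apply qle_trans with a; [apply qle_meet_l | exact Ha].
  - apply qle_trans with b; [apply qle_meet_r | exact Hb].
Qed.

(** If p <= a <= q then (a /\ q) \/ (b /\ p) = a: the identity behind (3) -> (2). *)
Lemma join_meet_sandwich a b p q : qle p a -> qle a q -> cg R (Join (Meet a q) (Meet b p)) a.
Proof.
  intros Hpa Haq. apply qle_antisym.
  - apply qle_join_lub; [apply qle_meet_l|].
    apply qle_trans with p; [apply qle_meet_r | exact Hpa].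
  - apply qle_trans with (Meet a q); [|apply qle_join_l].
    apply qle_meet_glb; [apply qle_refl | exact Haq].
Qed.

Lemma bigmeet_le_base (A : Type) (g : A -> term X) c l : qle (bigmeet g c l) c.
Proof.
  induction l as [|n l IH]; simpl; [apply qle_refl|].
  apply qle_trans with (bigmeet g c l); [apply qle_meet_r | exact IH].
Qed.

Lemma bigmeet_le_mem (A : Type) (g : A -> term X) c l n :
  In n l -> qle (bigmeet g c l) (g n).
Proof.
  induction l as [|m l IH]; simpl; [tauto|]. intros [<-|Hn]; [apply qle_meet_l|].
  apply qle_trans with (bigmeet g c l); [apply qle_meet_r | auto].
Qed.

Lemma bigmeet_glb (A : Type) (g : A -> term X) c l s :
  qle s c -> (forall n, In n l -> qle s (g n)) -> qle s (bigmeet g c l).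
Proof. induction l; simpl; auto using qle_meet_glb. Qed.

Lemma bigjoin_ge_base (A : Type) (g : A -> term X) c l : qle c (bigjoin g c l).
Proof.
  induction l as [|n l IH]; simpl; [apply qle_refl|].
  apply qle_trans with (bigjoin g c l); [exact IH | apply qle_join_r].
Qed.

Lemma bigjoin_ge_mem (A : Type) (g : A -> term X) c l n :
  In n l -> qle (g n) (bigjoin g c l).
Proof.
  induction l as [|m l IH]; simpl; [tauto|]. intros [<-|Hn]; [apply qle_join_l|].
  apply qle_trans with (bigjoin g c l); [auto | apply qle_join_r].
Qed.

Lemma bigjoin_lub (A : Type) (g : A -> term X) c l s :
  qle c s -> (forall n, In n l -> qle (g n) s) -> qle (bigjoin g c l) s.
Proof. induction l; simpl; auto using qle_join_lub. Qed.

Lemma cg_of_feq a b : feq a b -> cg R a b.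
Proof. apply (cg_map (f := fun t => t)); [intros ? ? [] | reflexivity | reflexivity]. Qed.

End QuotientOrder.

Section CutCalculus.
Variables (X : Type) (R : list (term X * term X)) (C : list (term X)).

(** Whitman's sequent calculus for the order of F(X)/rho, in which cuts may only
    go through terms of C. *)
Inductive derives : term X -> term X -> Prop :=
| dv_var x : derives (Var x) (Var x)
| dv_join_l a1 a2 b : derives a1 b -> derives a2 b -> derives (Join a1 a2) b
| dv_join_r1 a b1 b2 : derives a b1 -> derives a (Join b1 b2)
| dv_join_r2 a b1 b2 : derives a b2 -> derives a (Join b1 b2)
| dv_meet_l1 a1 a2 b : derives a1 b -> derives (Meet a1 a2) b
| dv_meet_l2 a1 a2 b : derives a2 b -> derives (Meet a1 a2) b
| dv_meet_r a b1 b2 : derives a b1 -> derives a b2 -> derives a (Meet b1 b2)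
| dv_cut a u b : In u C -> qle R a u -> qle R u b -> derives a b.

Local Hint Resolve dv_var dv_join_l dv_join_r1 dv_join_r2 dv_meet_l1 dv_meet_l2 dv_meet_r : core.

Lemma derives_sound a b : derives a b -> qle R a b.
Proof.
  induction 1.
  - apply qle_refl.
  - apply qle_join_lub; auto.
  - eapply qle_trans; [eassumption | apply qle_join_l].
  - eapply qle_trans; [eassumption | apply qle_join_r].
  - eapply qle_trans; [apply qle_meet_l | eassumption].
  - eapply qle_trans; [apply qle_meet_r | eassumption].
  - apply qle_meet_glb; auto.
  - eapply qle_trans; eassumption.
Qed.

Lemma derives_refl a : derives a a.
Proof. induction a; auto. Qed.

(** The premises of a derivation of [b |- c] whose last rule acts on the head of [b]. *)
Definition head_step (b c : term X) : Prop :=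
  match b with
  | Var x => c = Var x
  | Join b1 b2 => derives b1 c /\ derives b2 c
  | Meet b1 b2 => derives b1 c \/ derives b2 c
  end.

(** A derivation of [b |- c] can be prefixed by [a] as soon as [a <= b] and every
    head step out of [b] can be prefixed: right rules and cuts commute with the
    prefixing. *)
Lemma derives_trans_head b c : derives b c ->
  forall a, qle R a b -> (forall c', head_step b c' -> derives a c') -> derives a c.
Proof.
  induction 1 as [x | b1 b2 c | b c1 c2 | b c1 c2 | b1 b2 c | b1 b2 c | b c1 c2 | b u c Hu Hbu Huc];
    intros a Hab Hhead; simpl in Hhead; auto.
  - apply dv_cut with u; [exact Hu | eapply qle_trans; eassumption | exact Huc].
Qed.

Lemma derives_trans a b c : derives a b -> derives b c -> derives a c.
Proof.
  intro Hab; revert c.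
  induction Hab as [x | a1 a2 b _ IH1 _ IH2 | a b1 b2 Hab IH | a b1 b2 Hab IH
    | a1 a2 b _ IH | a1 a2 b _ IH | a b1 b2 Hb1 IH1 Hb2 IH2 | a u b Hu Hau Hub];
    intros c Hbc; auto.
  - apply (derives_trans_head Hbc); [apply derives_sound; auto|].
    intros c' Hc'; simpl in Hc'; apply IH; tauto.
  - apply (derives_trans_head Hbc); [apply derives_sound; auto|].
    intros c' Hc'; simpl in Hc'; apply IH; tauto.
  - apply (derives_trans_head Hbc); [apply derives_sound; auto|].
    intros c' [Hc'|Hc']; auto.
  - apply dv_cut with u; [exact Hu | exact Hau |].
    eapply qle_trans; [exact Hub | apply derives_sound, Hbc].
Qed.

Hypothesis cuts_cover_R : forall p q, In (p, q) R -> In p C.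

Lemma derives_of_cg a b : cg R a b -> derives a b /\ derives b a.
Proof.
  pose proof derives_refl as Hrefl.
  induction 1 as [a b Hab | | a b _ [] | a b c _ [] _ [] | a a' b b' _ [] _ [] | a a' b b' _ [] _ []
    | | | | | | | | ];
    try solve [split; eauto 6 | split; eauto using derives_trans].
  - split; apply dv_cut with a; eauto using qle_refl, qle_of_cg, cg_base.
  - split; apply dv_join_l; try apply dv_join_l; eauto.
  - split; apply dv_meet_r; try apply dv_meet_r; eauto.
Qed.

Lemma derives_complete a b : qle R a b -> derives a b.
Proof.
  intro Hab. apply derives_trans with (Meet a b);
    [apply (derives_of_cg Hab) | auto using derives_refl].
Qed.

End CutCalculus.

Section Whitman.
Variable X : Type.

Lemma derives_of_fle (a b : term X) : fle a b -> derives nil nil a b.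
Proof. apply derives_complete. intros p q []. Qed.

Lemma fle_of_derives (a b : term X) : derives nil nil a b -> fle a b.
Proof. apply derives_sound. Qed.

Lemma whitman_var_var (x y : X) : fle (Var x) (Var y) -> x = y.
Proof. intro H. apply derives_of_fle in H. inversion H; [reflexivity | contradiction]. Qed.

Lemma whitman_meet_var (a1 a2 : term X) y :
  fle (Meet a1 a2) (Var y) -> fle a1 (Var y) \/ fle a2 (Var y).
Proof.
  intro H. apply derives_of_fle in H.
  inversion H; [left | right | contradiction]; apply fle_of_derives; assumption.
Qed.

Lemma whitman_var_join x (b1 b2 : term X) :
  fle (Var x) (Join b1 b2) -> fle (Var x) b1 \/ fle (Var x) b2.
Proof.
  intro H. apply derives_of_fle in H.
  inversion H; [left | right | contradiction]; apply fle_of_derives; assumption.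
Qed.

Lemma whitman_meet_join (a1 a2 b1 b2 : term X) : fle (Meet a1 a2) (Join b1 b2) ->
  fle a1 (Join b1 b2) \/ fle a2 (Join b1 b2) \/ fle (Meet a1 a2) b1 \/ fle (Meet a1 a2) b2.
Proof.
  intro H. apply derives_of_fle in H.
  inversion H; [do 2 right; left | do 3 right | left | right; left | contradiction];
    apply fle_of_derives; assumption.
Qed.

End Whitman.

Fixpoint tsubst (A B : Type) (s : A -> term B) (t : term A) : term B :=
  match t with
  | Var x => s x
  | Join a b => Join (tsubst s a) (tsubst s b)
  | Meet a b => Meet (tsubst s a) (tsubst s b)
  end.

Lemma tsubst_feq (A B : Type) (s : A -> term B) a b : feq a b -> feq (tsubst s a) (tsubst s b).
Proof. apply cg_map; [intros ? ? [] | reflexivity | reflexivity]. Qed.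

Lemma tsubst_fle (A B : Type) (s : A -> term B) a b : fle a b -> fle (tsubst s a) (tsubst s b).
Proof. exact (@tsubst_feq A B s (Meet a b) a). Qed.

Lemma tsubst_bigmeet (A B N : Type) (s : A -> term B) (g : N -> term A) c l :
  tsubst s (bigmeet g c l) = bigmeet (fun n => tsubst s (g n)) (tsubst s c) l.
Proof. induction l as [|n l IH]; simpl; [reflexivity | rewrite IH; reflexivity]. Qed.

Definition classicb (P : Prop) : bool := if excluded_middle_informative P then true else false.

Lemma classicbE (P : Prop) : classicb P = true <-> P.
Proof. unfold classicb. destruct (excluded_middle_informative P); split; auto; discriminate. Qed.

Lemma In_enum (T : finType) (x : T) : In x (enum T).
Proof.
  have : x \in enum T by rewrite mem_enum.
  elim: (enum T) => [|y s IH] //=; rewrite inE => /orP [/eqP ->|/IH]; auto.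
Qed.

(** For N finite and [w : N -> term B], the substitution [expand] : F(B + N) -> F(B)
    fixing B has a lower adjoint [lower]: [t <= expand s] iff [lower t <= s]. *)
Section LowerAdjoint.
Variables (B : Type) (N : finType) (w : N -> term B).

Definition expand : term (B + N) -> term B :=
  tsubst (fun z => match z with inl b => Var b | inr n => w n end).

Definition gens_above (t : term B) : list N :=
  List.filter (fun n => classicb (fle t (w n))) (enum N).

Lemma gens_above_spec t n : In n (gens_above t) <-> fle t (w n).
Proof.
  unfold gens_above. rewrite filter_In classicbE. split; [tauto | split; auto using In_enum].
Qed.

Fixpoint lower (t : term B) : term (B + N) :=
  bigmeet (fun n => Var (inr n))
    (match t with
     | Var b => Var (inl b)
     | Join t1 t2 => Join (lower t1) (lower t2)
     | Meet t1 t2 => Meet (lower t1) (lower t2)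
     end) (gens_above t).

Definition lower_core (t : term B) : term (B + N) :=
  match t with
  | Var b => Var (inl b)
  | Join t1 t2 => Join (lower t1) (lower t2)
  | Meet t1 t2 => Meet (lower t1) (lower t2)
  end.

Lemma lower_unfold t : lower t = bigmeet (fun n => Var (inr n)) (lower_core t) (gens_above t).
Proof. destruct t; reflexivity. Qed.

Lemma lower_le_core t : fle (lower t) (lower_core t).
Proof. rewrite lower_unfold. apply bigmeet_le_base. Qed.

Lemma lower_le_gen t n : fle t (w n) -> fle (lower t) (Var (inr n)).
Proof.
  intro H. rewrite lower_unfold.
  apply (bigmeet_le_mem nil (fun n => Var (inr n))), gens_above_spec, H.
Qed.

Lemma lower_expand_above t : fle t (expand (lower t)).
Proof.
  induction t; rewrite lower_unfold; unfold expand; rewrite tsubst_bigmeet; simpl;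
    (apply bigmeet_glb; [| intros n Hn; apply gens_above_spec, Hn]).
  - apply qle_refl.
  - apply qle_join_mono; assumption.
  - apply qle_meet_mono; assumption.
Qed.

(** Induction on [s] for the minimality of [lower t]: only the cases where [s] is a
    variable of B or a join depend on the shape of [t]. *)
Lemma lower_least_by_cases t :
  (forall b, fle t (Var b) -> fle (lower t) (Var (inl b))) ->
  (forall s1 s2, fle t (Join (expand s1) (expand s2)) ->
     fle t (expand s1) \/ fle t (expand s2) \/ fle (lower t) (Join s1 s2)) ->
  forall s, fle t (expand s) -> fle (lower t) s.
Proof.
  intros Hvar Hjoin s. induction s as [[b|n] | s1 IH1 s2 IH2 | s1 IH1 s2 IH2]; intro Hts.
  - exact (Hvar b Hts).
  - apply lower_le_gen, Hts.
  - destruct (Hjoin s1 s2 Hts) as [H|[H|H]]; [| | exact H].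
    + apply qle_trans with s1; [exact (IH1 H) | apply qle_join_l].
    + apply qle_trans with s2; [exact (IH2 H) | apply qle_join_r].
  - apply qle_meet_glb; [apply IH1 | apply IH2]; eapply qle_trans;
      [exact Hts | apply qle_meet_l | exact Hts | apply qle_meet_r].
Qed.

Lemma lower_least t s : fle t (expand s) -> fle (lower t) s.
Proof.
  revert s. induction t as [b | t1 IH1 t2 IH2 | t1 IH1 t2 IH2].
  - apply lower_least_by_cases.
    + intros b' H. apply whitman_var_var in H as <-. apply lower_le_core.
    + intros s1 s2 H. apply whitman_var_join in H. tauto.
  - intros s Hts. apply qle_trans with (lower_core (Join t1 t2)); [apply lower_le_core|].
    apply qle_join_lub; [apply IH1 | apply IH2]; eapply qle_trans;
      [apply qle_join_l | exact Hts | apply qle_join_r | exact Hts].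
  - assert (Hpart : forall s, fle t1 (expand s) \/ fle t2 (expand s) ->
                              fle (lower (Meet t1 t2)) s).
    { intros s Hs. apply qle_trans with (lower_core (Meet t1 t2)); [apply lower_le_core|].
      destruct Hs as [H|H].
      - apply qle_trans with (lower t1); [apply qle_meet_l | exact (IH1 s H)].
      - apply qle_trans with (lower t2); [apply qle_meet_r | exact (IH2 s H)]. }
    apply lower_least_by_cases.
    + intros b H. apply Hpart, whitman_meet_var, H.
    + intros s1 s2 H. apply whitman_meet_join in H as [H|[H|[H|H]]]; auto.
Qed.

End LowerAdjoint.

Lemma hom_qle (Y Z : Type) (R : list (term Z * term Z)) (f : term Y -> term Z) a b :
  is_hom (cg R) (@Join Z) (@Meet Z) f -> fle a b -> qle R (f a) (f b).
Proof. intros [Hf [_ Hmeet]] Hab. eapply cg_trans; [apply cg_sym, Hmeet | apply Hf, Hab]. Qed.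

Definition least_preimages (Y T : Type) (E : T -> T -> Prop) (f : term Y -> T) : Prop :=
  forall d, exists s0, E (f s0) d /\ forall s, E (f s) d -> fle s0 s.

Section Transfer.
Variables (Y Z : Type) (X : finType) (R : list (term Z * term Z)).
Variables (g : term Y -> term Z) (pi : term X -> term Z).
Hypothesis g_epi : is_epi (cg R) (@Join Z) (@Meet Z) g.
Hypothesis pi_epi : is_epi (cg R) (@Join Z) (@Meet Z) pi.

Definition gen_preimage (x : X) : term Y :=
  proj1_sig (constructive_indefinite_description _ (proj2 g_epi (pi (Var x)))).

Lemma gen_preimage_spec x : cg R (g (gen_preimage x)) (pi (Var x)).
Proof. unfold gen_preimage. destruct (constructive_indefinite_description _ _); assumption. Qed.

Definition var_preimage (y : Y) : term X :=
  proj1_sig (constructive_indefinite_description _ (proj2 pi_epi (g (Var y)))).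

Lemma var_preimage_spec y : cg R (pi (var_preimage y)) (g (Var y)).
Proof. unfold var_preimage. destruct (constructive_indefinite_description _ _); assumption. Qed.

Definition pull_back : term (Y + X) -> term X :=
  tsubst (fun z => match z with inl y => var_preimage y | inr x => Var x end).

Lemma pull_back_spec s : cg R (pi (pull_back s)) (g (expand gen_preimage s)).
Proof.
  destruct g_epi as [[_ [g_join g_meet]] _]. destruct pi_epi as [[_ [pi_join pi_meet]] _].
  induction s as [[y|x] | s1 IH1 s2 IH2 | s1 IH1 s2 IH2]; simpl.
  - apply var_preimage_spec.
  - apply cg_sym, gen_preimage_spec.
  - eapply cg_trans; [apply pi_join|]. eapply cg_trans; [apply cg_join; eassumption|].
    apply cg_sym, g_join.
  - eapply cg_trans; [apply pi_meet|]. eapply cg_trans; [apply cg_meet; eassumption|].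
    apply cg_sym, g_meet.
Qed.

Lemma pull_back_inr s : pull_back (tsubst (fun x => Var (inr x)) s) = s.
Proof. unfold pull_back. induction s; simpl; [reflexivity | rewrite IHs1 IHs2; reflexivity ..]. Qed.

(** For d with least g-preimage s0, the element [pull_back (lower s0) /\ u], u any
    pi-preimage of d, is the least pi-preimage of d. *)
Theorem least_preimages_transfer : least_preimages (cg R) g -> least_preimages (cg R) pi.
Proof.
  intros g_least d. destruct (g_least d) as [s0 [Hs0 Hmin]]. destruct (proj2 pi_epi d) as [u Hu].
  pose proof pi_epi as [[_ [_ pi_meet]] _].
  set (m := pull_back (lower gen_preimage s0)).
  assert (Hdm : qle R d (pi m)).
  { apply qle_trans with (g s0); [apply qle_of_cg; auto|].
    apply qle_trans with (g (expand gen_preimage (lower gen_preimage s0))).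
    - apply (hom_qle (proj1 g_epi)), lower_expand_above.
    - apply qle_of_cg, cg_sym, pull_back_spec. }
  exists (Meet m u). split.
  - eapply cg_trans; [apply pi_meet|].
    eapply cg_trans; [apply cg_meet; [apply cg_refl | exact Hu]|].
    eapply cg_trans; [apply cg_meet_comm | exact Hdm].
  - intros s Hs. apply qle_trans with m; [apply qle_meet_l|].
    rewrite <- (pull_back_inr s). apply tsubst_fle, lower_least, Hmin.
    eapply cg_trans; [apply cg_sym, pull_back_spec|]. rewrite pull_back_inr. exact Hs.
Qed.

End Transfer.

Fixpoint dual (X : Type) (t : term X) : term X :=
  match t with
  | Var x => Var x
  | Join a b => Meet (dual a) (dual b)
  | Meet a b => Join (dual a) (dual b)
  end.

Lemma dual_involutive (X : Type) (t : term X) : dual (dual t) = t.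
Proof. induction t; simpl; [reflexivity | rewrite IHt1 IHt2; reflexivity ..]. Qed.

Definition dual_rel (X : Type) (R : list (term X * term X)) : list (term X * term X) :=
  List.map (fun p => (dual p.1, dual p.2)) R.

Lemma dual_rel_involutive (X : Type) (R : list (term X * term X)) : dual_rel (dual_rel R) = R.
Proof.
  unfold dual_rel. rewrite List.map_map. rewrite <- (List.map_id R) at 2.
  apply List.map_ext. intros [a b]. simpl. rewrite !dual_involutive. reflexivity.
Qed.

Lemma In_dual_rel (X : Type) (R : list (term X * term X)) a b :
  In (a, b) R -> In (dual a, dual b) (dual_rel R).
Proof. apply (List.in_map (fun p => (dual p.1, dual p.2)) R (a, b)). Qed.

Lemma cg_dual (X : Type) (R : list (term X * term X)) a b :
  cg R a b -> cg (dual_rel R) (dual a) (dual b).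
Proof. induction 1; simpl; eauto using cg, In_dual_rel. Qed.

Lemma cg_undual (X : Type) (R : list (term X * term X)) a b :
  cg (dual_rel R) a b -> cg R (dual a) (dual b).
Proof. intro H. rewrite <- (dual_rel_involutive R). apply cg_dual, H. Qed.

Lemma fle_dual (X : Type) (a b : term X) : fle a b -> fle (dual b) (dual a).
Proof.
  intro H. apply qle_of_join. eapply cg_trans; [apply cg_join_comm | exact (cg_dual H)].
Qed.

Lemma greatest_of_dual_least (X : Type) (R : list (term X * term X)) u :
  class_has_least (dual_rel R) (dual u) -> class_has_greatest R u.
Proof.
  intros [m [Hm Hmin]]. exists (dual m). split.
  - rewrite <- (dual_involutive u). apply cg_undual, Hm.
  - intros v Hv. rewrite <- (dual_involutive v). apply fle_dual, Hmin, cg_dual, Hv.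
Qed.

Lemma upper_bounded_dual (X : Type) (R : list (term X * term X)) :
  upper_bounded (cg R) (@Join X) (@Meet X) ->
  lower_bounded (cg (dual_rel R)) (@Join X) (@Meet X).
Proof.
  intros [Y [f [[[f_feq [f_join f_meet]] f_onto] f_greatest]]].
  exists Y, (fun s => dual (f (dual s))). split; [split; [split; [|split]|] |].
  - intros s t Hst. apply cg_dual, f_feq, (cg_dual Hst).
  - intros s t. apply (cg_dual (f_meet (dual s) (dual t))).
  - intros s t. apply (cg_dual (f_join (dual s) (dual t))).
  - intro d. destruct (f_onto (dual d)) as [s Hs]. exists (dual s).
    rewrite dual_involutive; rewrite <- (dual_involutive d). apply cg_dual, Hs.
  - intro d. destruct (f_greatest (dual d)) as [s0 [Hs0 Hmax]]. exists (dual s0). split.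
    + rewrite dual_involutive; rewrite <- (dual_involutive d). apply cg_dual, Hs0.
    + intros s Hs. rewrite <- (dual_involutive s). apply fle_dual, Hmax.
      rewrite <- (dual_involutive (f (dual s))). apply cg_undual, Hs.
Qed.

Lemma gen_sub_dual (X : Type) (S : list (term X * term X)) p :
  gen_sub S p -> gen_sub (dual_rel S) (dual p.1, dual p.2).
Proof.
  induction 1 as [[a b] Hp | p q _ IHp _ IHq | p q _ IHp _ IHq].
  - apply gs_base, In_dual_rel, Hp.
  - exact (gs_meet IHp IHq).
  - exact (gs_join IHp IHq).
Qed.

Lemma cong_fin_gen_dual (X : Type) (R : list (term X * term X)) :
  cong_fin_gen R -> cong_fin_gen (dual_rel R).
Proof.
  intros [S [S_in_rho S_gen]]. exists (dual_rel S). split.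
  - intros p Hp. unfold dual_rel in Hp. apply List.in_map_iff in Hp as [q [<- Hq]].
    apply cg_dual, S_in_rho, Hq.
  - intros a b Hab. destruct (S_gen _ _ (cg_undual Hab)) as [a' [b' [Hgen [Ha Hb]]]].
    exists (dual a'), (dual b'). split; [exact (gen_sub_dual Hgen)|].
    split; [rewrite <- (dual_involutive a); exact (cg_dual Ha)
          | rewrite <- (dual_involutive b); exact (cg_dual Hb)].
Qed.

Lemma id_epi (X : Type) (R : list (term X * term X)) :
  is_epi (cg R) (@Join X) (@Meet X) (fun t => t).
Proof.
  split; [split; [apply cg_of_feq | split; intros; apply cg_refl] |].
  intro d. exists d. apply cg_refl.
Qed.

Lemma least_classes_of_lower_bounded (X : finType) (R : list (term X * term X)) :
  lower_bounded (cg R) (@Join X) (@Meet X) -> forall u, class_has_least R u.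
Proof.
  intros [Y [f [f_epi f_least]]]. exact (least_preimages_transfer f_epi (id_epi R) f_least).
Qed.

Lemma In_seq_nth (A : Type) (s : list A) x0 i : i < size s -> In (seq.nth x0 s i) s.
Proof. elim: s i => [|x s IH] [|i] //= Hi; [left | right; apply IH]; auto. Qed.

Lemma seq_nth_of_In (A : Type) (s : list A) p : In p s -> exists2 i, i < size s & seq.nth p s i = p.
Proof.
  elim: s => [|x s IH] //= [->|/IH [i Hi Hp]]; [exists 0 | exists i.+1]; auto.
Qed.

(** Indexing the generating pairs of rho by a finite set,
    the second components define an epimorphism onto F(X), which has least
    preimages; evaluating the first components at them gives least elements of
    the rho-classes. *)
Section FiniteGeneration.
Variables (X : finType) (R S : list (term X * term X)).
Hypothesis S_in_rho : forall p, In p S -> cg R p.1 p.2.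
Hypothesis S_generates : forall a b, cg R a b ->
  exists a' b', gen_sub S (a', b') /\ feq a a' /\ feq b b'.

Definition generator (k : 'I_(size S)) : term X * term X := tnth (in_tuple S) k.

Lemma generator_In k : In (generator k) S.
Proof. unfold generator. rewrite (tnth_nth (generator k)). apply In_seq_nth, ltn_ord. Qed.

Lemma generator_onto p : In p S -> exists k, generator k = p.
Proof.
  intro Hp. destruct (seq_nth_of_In Hp) as [i Hi Hip]. exists (Ordinal Hi).
  unfold generator. rewrite (tnth_nth p). exact Hip.
Qed.

Definition left_eval : term 'I_(size S) -> term X := tsubst (fun k => (generator k).1).
Definition right_eval : term 'I_(size S) -> term X := tsubst (fun k => (generator k).2).

Lemma gen_sub_eval p : gen_sub S p -> exists w, left_eval w = p.1 /\ right_eval w = p.2.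
Proof.
  induction 1 as [p Hp | p q _ [w1 [Hl1 Hr1]] _ [w2 [Hl2 Hr2]]
                 | p q _ [w1 [Hl1 Hr1]] _ [w2 [Hl2 Hr2]]].
  - destruct (generator_onto Hp) as [k <-]. exists (Var k). split; reflexivity.
  - exists (Join w1 w2). unfold left_eval, right_eval in *. simpl.
    rewrite Hl1 Hr1 Hl2 Hr2. split; reflexivity.
  - exists (Meet w1 w2). unfold left_eval, right_eval in *. simpl.
    rewrite Hl1 Hr1 Hl2 Hr2. split; reflexivity.
Qed.

Lemma eval_in_rho w : cg R (left_eval w) (right_eval w).
Proof.
  unfold left_eval, right_eval. induction w; simpl.
  - apply S_in_rho, generator_In.
  - apply cg_join; assumption.
  - apply cg_meet; assumption.
Qed.

Lemma right_eval_epi : is_epi (@feq X) (@Join X) (@Meet X) right_eval.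
Proof.
  split; [split; [apply tsubst_feq | split; intros; apply cg_refl] |].
  intro d. destruct (S_generates (cg_refl R d)) as [a' [b' [Hgen [_ Hb]]]].
  destruct (gen_sub_eval Hgen) as [w [_ Hw]]. exists w. rewrite Hw. apply cg_sym, Hb.
Qed.

Lemma least_classes_of_fin_gen u : class_has_least R u.
Proof.
  assert (free_least : least_preimages (@feq X) (fun t : term X => t)).
  { intro d. exists d. split; [apply cg_refl | intros s Hs; apply qle_of_cg, cg_sym, Hs]. }
  destruct (least_preimages_transfer (id_epi nil) right_eval_epi free_least u)
    as [m [Hm Hmin]].
  exists (left_eval m). split.
  - eapply cg_trans; [apply eval_in_rho | apply cg_of_feq, Hm].
  - intros v Hv. destruct (S_generates Hv) as [a' [b' [Hgen [Ha Hb]]]].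
    destruct (gen_sub_eval Hgen) as [w [Hwl Hwr]].
    apply qle_trans with (left_eval w).
    + apply tsubst_fle, Hmin. simpl in Hwr. rewrite Hwr. apply cg_sym, Hb.
    + simpl in Hwl. rewrite Hwl. apply qle_of_cg, cg_sym, Ha.
Qed.

End FiniteGeneration.

Definition all_classes_bounded (X : Type) (R : list (term X * term X)) : Prop :=
  forall u, class_has_least R u /\ class_has_greatest R u.

Lemma classes_bounded_of_quotient_bounded (X : finType) (R : list (term X * term X)) :
  quotient_bounded R -> all_classes_bounded R.
Proof.
  intros [R_lower R_upper] u. split.
  - apply least_classes_of_lower_bounded, R_lower.
  - apply greatest_of_dual_least, least_classes_of_lower_bounded, upper_bounded_dual, R_upper.
Qed.

Lemma quotient_bounded_of_classes_bounded (X : finType) (R : list (term X * term X)) :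
  all_classes_bounded R -> quotient_bounded R.
Proof.
  intro Hcls. split; exists X, (fun t => t); (split; [apply id_epi|]);
    intro d; destruct (Hcls d) as [[m Hm] [M HM]]; eauto.
Qed.

Lemma classes_bounded_of_fin_gen (X : finType) (R : list (term X * term X)) :
  cong_fin_gen R -> all_classes_bounded R.
Proof.
  intros Hfg u. split.
  - destruct Hfg as [S [S_in_rho S_gen]]. exact (least_classes_of_fin_gen S_in_rho S_gen u).
  - apply greatest_of_dual_least.
    destruct (cong_fin_gen_dual Hfg) as [S [S_in_rho S_gen]].
    exact (least_classes_of_fin_gen S_in_rho S_gen (dual u)).
Qed.

Section Generators.
Variables (X : finType) (R : list (term X * term X)).

Definition cut_terms : list (term X) := List.map (@Var X) (enum X) ++ List.map fst R.

Hypothesis cuts_bounded : forall u, In u cut_terms ->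
  class_has_least R u /\ class_has_greatest R u.

Lemma cut_terms_cover_R p q : In (p, q) R -> In p cut_terms.
Proof. intro H. apply in_or_app. right. exact (List.in_map fst R (p, q) H). Qed.

Definition least_rep (u : term X) : term X :=
  match excluded_middle_informative (class_has_least R u) with
  | left H => proj1_sig (constructive_indefinite_description _ H)
  | right _ => u
  end.

Definition greatest_rep (u : term X) : term X :=
  match excluded_middle_informative (class_has_greatest R u) with
  | left H => proj1_sig (constructive_indefinite_description _ H)
  | right _ => u
  end.

Lemma least_rep_spec u : In u cut_terms ->
  cg R (least_rep u) u /\ forall v, cg R v u -> fle (least_rep u) v.
Proof.
  intro Hu. unfold least_rep. destruct (excluded_middle_informative _) as [H|H].
  - destruct (constructive_indefinite_description _ H); assumption.
  - destruct (H (proj1 (cuts_bounded Hu))).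
Qed.

Lemma greatest_rep_spec u : In u cut_terms ->
  cg R (greatest_rep u) u /\ forall v, cg R v u -> fle v (greatest_rep u).
Proof.
  intro Hu. unfold greatest_rep. destruct (excluded_middle_informative _) as [H|H].
  - destruct (constructive_indefinite_description _ H); assumption.
  - destruct (H (proj2 (cuts_bounded Hu))).
Qed.

Lemma least_rep_below u s : In u cut_terms -> qle R u s -> fle (least_rep u) s.
Proof.
  intros Hu Hus. apply qle_trans with (Meet u s);
    [apply (least_rep_spec Hu), Hus | apply qle_meet_r].
Qed.

Lemma greatest_rep_above u s : In u cut_terms -> qle R s u -> fle s (greatest_rep u).
Proof.
  intros Hu Hsu. apply qle_trans with (Join s u); [apply qle_join_l|].
  apply (greatest_rep_spec Hu), join_of_qle, Hsu.
Qed.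

Definition cuts_above (t : term X) : list (term X) :=
  List.filter (fun u => classicb (qle R t u)) cut_terms.

Definition cuts_below (t : term X) : list (term X) :=
  List.filter (fun u => classicb (qle R u t)) cut_terms.

Lemma cuts_above_spec t u : In u (cuts_above t) <-> In u cut_terms /\ qle R t u.
Proof. unfold cuts_above. rewrite filter_In classicbE. reflexivity. Qed.

Lemma cuts_below_spec t u : In u (cuts_below t) <-> In u cut_terms /\ qle R u t.
Proof. unfold cuts_below. rewrite filter_In classicbE. reflexivity. Qed.

(** For r = least_rep it lies below, for r = greatest_rep
    above the rho-class of [t]. *)
Fixpoint approx (r : term X -> term X) (t : term X) : term X :=
  bigjoin r
    (bigmeet r
      (match t with
       | Var x => Var x
       | Join t1 t2 => Join (approx r t1) (approx r t2)
       | Meet t1 t2 => Meet (approx r t1) (approx r t2)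
       end) (cuts_above t)) (cuts_below t).

Definition approx_core (r : term X -> term X) (t : term X) : term X :=
  match t with
  | Var x => Var x
  | Join t1 t2 => Join (approx r t1) (approx r t2)
  | Meet t1 t2 => Meet (approx r t1) (approx r t2)
  end.

Lemma approx_unfold r t :
  approx r t = bigjoin r (bigmeet r (approx_core r t) (cuts_above t)) (cuts_below t).
Proof. destruct t; reflexivity. Qed.

Lemma approx_least_le t s : qle R t s ->
  fle (bigmeet least_rep (approx_core least_rep t) (cuts_above t)) s ->
  fle (approx least_rep t) s.
Proof.
  intros Hts Hcore. rewrite approx_unfold. apply bigjoin_lub; [exact Hcore|].
  intros u Hu. apply cuts_below_spec in Hu as [Hu Hut].
  apply least_rep_below; [exact Hu | eapply qle_trans; eassumption].
Qed.

Lemma approx_greatest_ge s t : qle R s t ->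
  fle s (approx_core greatest_rep t) -> fle s (approx greatest_rep t).
Proof.
  intros Hst Hcore. rewrite approx_unfold.
  eapply qle_trans; [| apply (bigjoin_ge_base nil greatest_rep)].
  apply bigmeet_glb; [exact Hcore|].
  intros u Hu. apply cuts_above_spec in Hu as [Hu Htu].
  apply greatest_rep_above; [exact Hu | eapply qle_trans; eassumption].
Qed.

Lemma approx_least_below t s : derives R cut_terms t s -> fle (approx least_rep t) s.
Proof.
  intro Hder. pose proof (derives_sound Hder) as Hts. revert Hts.
  induction Hder as [x | a1 a2 b H1 IH1 H2 IH2 | a b1 b2 H IH | a b1 b2 H IH
    | a1 a2 b H IH | a1 a2 b H IH | a b1 b2 H1 IH1 H2 IH2 | a u b Hu Hau Hub]; intro Hts.
  - apply approx_least_le; [exact Hts | apply bigmeet_le_base].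
  - apply approx_least_le; [exact Hts|]. eapply qle_trans; [apply bigmeet_le_base|].
    apply qle_join_lub; [apply IH1, (derives_sound H1) | apply IH2, (derives_sound H2)].
  - eapply qle_trans; [apply IH, (derives_sound H) | apply qle_join_l].
  - eapply qle_trans; [apply IH, (derives_sound H) | apply qle_join_r].
  - apply approx_least_le; [exact Hts|]. eapply qle_trans; [apply bigmeet_le_base|].
    eapply qle_trans; [apply qle_meet_l | apply IH, (derives_sound H)].
  - apply approx_least_le; [exact Hts|]. eapply qle_trans; [apply bigmeet_le_base|].
    eapply qle_trans; [apply qle_meet_r | apply IH, (derives_sound H)].
  - apply qle_meet_glb; [apply IH1, (derives_sound H1) | apply IH2, (derives_sound H2)].
  - apply approx_least_le; [exact Hts|].
    eapply qle_trans; [apply (bigmeet_le_mem nil least_rep), cuts_above_spec; eauto|].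
    apply least_rep_below; assumption.
Qed.

Lemma approx_greatest_above s t : derives R cut_terms s t -> fle s (approx greatest_rep t).
Proof.
  intro Hder. pose proof (derives_sound Hder) as Hst. revert Hst.
  induction Hder as [x | a1 a2 b H1 IH1 H2 IH2 | a b1 b2 H IH | a b1 b2 H IH
    | a1 a2 b H IH | a1 a2 b H IH | a b1 b2 H1 IH1 H2 IH2 | a u b Hu Hau Hub]; intro Hst.
  - apply approx_greatest_ge; [exact Hst | apply qle_refl].
  - apply qle_join_lub; [apply IH1, (derives_sound H1) | apply IH2, (derives_sound H2)].
  - apply approx_greatest_ge; [exact Hst|].
    eapply qle_trans; [apply IH, (derives_sound H) | apply qle_join_l].
  - apply approx_greatest_ge; [exact Hst|].
    eapply qle_trans; [apply IH, (derives_sound H) | apply qle_join_r].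
  - eapply qle_trans; [apply qle_meet_l | apply IH, (derives_sound H)].
  - eapply qle_trans; [apply qle_meet_r | apply IH, (derives_sound H)].
  - apply approx_greatest_ge; [exact Hst|].
    apply qle_meet_glb; [apply IH1, (derives_sound H1) | apply IH2, (derives_sound H2)].
  - rewrite approx_unfold. eapply qle_trans; [apply greatest_rep_above; eassumption|].
    apply (bigjoin_ge_mem nil greatest_rep), cuts_below_spec; auto.
Qed.

Definition generators : list (term X * term X) :=
  List.map (fun x => (Var x, Var x)) (enum X) ++
  List.map (fun u => (least_rep u, greatest_rep u)) cut_terms ++
  List.map (fun u => (greatest_rep u, least_rep u)) cut_terms.

Lemma generators_in_rho p : In p generators -> cg R p.1 p.2.
Proof.
  intro Hp. apply in_app_or in Hp as [Hp|Hp].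
  - apply List.in_map_iff in Hp as [x [<- _]]. apply cg_refl.
  - apply in_app_or in Hp as [Hp|Hp]; apply List.in_map_iff in Hp as [u [<- Hu]];
      pose proof (proj1 (least_rep_spec Hu)); pose proof (proj1 (greatest_rep_spec Hu));
      simpl; eauto using cg.
Qed.

Definition in_sublattice (a b : term X) : Prop :=
  exists a' b', gen_sub generators (a', b') /\ feq a a' /\ feq b b'.

Lemma in_sublattice_generator a b : In (a, b) generators -> in_sublattice a b.
Proof. intro H. exists a, b. repeat split; [apply gs_base, H | apply cg_refl ..]. Qed.

Lemma in_sublattice_join a b c d :
  in_sublattice a b -> in_sublattice c d -> in_sublattice (Join a c) (Join b d).
Proof.
  intros [a' [b' [Hab [Ha Hb]]]] [c' [d' [Hcd [Hc Hd]]]].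
  exists (Join a' c'), (Join b' d').
  repeat split; [exact (gs_join Hab Hcd) | apply cg_join ..]; assumption.
Qed.

Lemma in_sublattice_meet a b c d :
  in_sublattice a b -> in_sublattice c d -> in_sublattice (Meet a c) (Meet b d).
Proof.
  intros [a' [b' [Hab [Ha Hb]]]] [c' [d' [Hcd [Hc Hd]]]].
  exists (Meet a' c'), (Meet b' d').
  repeat split; [exact (gs_meet Hab Hcd) | apply cg_meet ..]; assumption.
Qed.

Lemma in_sublattice_diag t : in_sublattice t t.
Proof.
  induction t as [x | |]; [| apply in_sublattice_join | apply in_sublattice_meet]; auto.
  apply in_sublattice_generator, in_or_app. left.
  apply (List.in_map (fun x => (Var x, Var x))), In_enum.
Qed.

Lemma in_sublattice_feq a b a2 b2 :
  in_sublattice a b -> feq a a2 -> feq b b2 -> in_sublattice a2 b2.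
Proof.
  intros [a' [b' [Hgen [Ha Hb]]]] Ha2 Hb2. exists a', b'.
  repeat split; [exact Hgen | apply cg_trans with a | apply cg_trans with b]; auto.
Qed.

Lemma in_sublattice_bigjoin (r1 r2 : term X -> term X) c1 c2 l :
  (forall u, In u l -> in_sublattice (r1 u) (r2 u)) -> in_sublattice c1 c2 ->
  in_sublattice (bigjoin r1 c1 l) (bigjoin r2 c2 l).
Proof.
  induction l as [|u l IH]; intros Hl Hc; [exact Hc|].
  exact (in_sublattice_join (Hl u (or_introl erefl)) (IH (fun v Hv => Hl v (or_intror Hv)) Hc)).
Qed.

Lemma in_sublattice_bigmeet (r1 r2 : term X -> term X) c1 c2 l :
  (forall u, In u l -> in_sublattice (r1 u) (r2 u)) -> in_sublattice c1 c2 ->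
  in_sublattice (bigmeet r1 c1 l) (bigmeet r2 c2 l).
Proof.
  induction l as [|u l IH]; intros Hl Hc; [exact Hc|].
  exact (in_sublattice_meet (Hl u (or_introl erefl)) (IH (fun v Hv => Hl v (or_intror Hv)) Hc)).
Qed.

Lemma in_sublattice_approx r1 r2 :
  (forall u, In u cut_terms -> in_sublattice (r1 u) (r2 u)) ->
  forall t, in_sublattice (approx r1 t) (approx r2 t).
Proof.
  intros Hr t. induction t; rewrite !approx_unfold;
    (apply in_sublattice_bigjoin; [intros u Hu; apply Hr; apply cuts_below_spec in Hu; tauto|]);
    (apply in_sublattice_bigmeet; [intros u Hu; apply Hr; apply cuts_above_spec in Hu; tauto|]);
    simpl.
  - apply in_sublattice_diag.
  - apply in_sublattice_join; assumption.
  - apply in_sublattice_meet; assumption.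
Qed.

(** With P = approx least_rep a <= a, b <= Q = approx greatest_rep a, the pair (a, b) equals
    ((a /\ Q) \/ (b /\ P), (a /\ P) \/ (b /\ Q)), a sublattice combination of (a, a),
    (b, b), (P, Q) and (Q, P). *)
Theorem fin_gen_of_bounded_cuts : cong_fin_gen R.
Proof.
  exists generators. split; [exact generators_in_rho|].
  intros a b Hab.
  set (P := approx least_rep a). set (Q := approx greatest_rep a).
  assert (derives_ab : derives R cut_terms a b /\ derives R cut_terms b a)
    by exact (derives_of_cg cut_terms_cover_R Hab).
  assert (P_le_a : fle P a) by exact (approx_least_below (derives_refl _ _ a)).
  assert (P_le_b : fle P b) by exact (approx_least_below (proj1 derives_ab)).
  assert (a_le_Q : fle a Q) by exact (approx_greatest_above (derives_refl _ _ a)).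
  assert (b_le_Q : fle b Q) by exact (approx_greatest_above (proj2 derives_ab)).
  assert (PQ : in_sublattice P Q /\ in_sublattice Q P).
  { split; apply in_sublattice_approx; intros u Hu; apply in_sublattice_generator;
      apply in_or_app; right; apply in_or_app; [left | right];
      exact (List.in_map (fun u => (_, _)) cut_terms u Hu). }
  apply in_sublattice_feq with (Join (Meet a Q) (Meet b P)) (Join (Meet a P) (Meet b Q)).
  - destruct PQ as [PQ QP].
    apply in_sublattice_join; apply in_sublattice_meet;
      first [apply in_sublattice_diag | assumption].
  - apply join_meet_sandwich; assumption.
  - eapply cg_trans; [apply cg_join_comm | apply join_meet_sandwich; assumption].
Qed.

End Generators.

Lemma cut_term_shape (X : finType) (R : list (term X * term X)) u :
  In u (cut_terms R) ->
  (exists x : X, u = Var x) \/ (exists p, In p R /\ (subterm u p.1 \/ subterm u p.2)).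
Proof.
  intro Hu. apply in_app_or in Hu as [Hu|Hu]; apply List.in_map_iff in Hu as [z [<- Hz]].
  - left. exists z. reflexivity.
  - right. exists z. split; [exact Hz | left; apply st_refl].
Qed.

Theorem mainTheorem6 (X : finType) (R : list (term X * term X)) :
  (quotient_bounded R <-> cong_fin_gen R) /\
  (cong_fin_gen R <->
    (forall u : term X,
       ((exists x : X, u = Var x) \/
        (exists p, List.In p R /\ (subterm u p.1 \/ subterm u p.2))) ->
       class_has_least R u /\ class_has_greatest R u)).
Proof.
  split; split.
  - intro Hbounded. apply fin_gen_of_bounded_cuts. intros u _.
    apply classes_bounded_of_quotient_bounded, Hbounded.
  - intro Hfg. apply quotient_bounded_of_classes_bounded, classes_bounded_of_fin_gen, Hfg.
  - intros Hfg u _. apply classes_bounded_of_fin_gen, Hfg.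
  - intro Hcond. apply fin_gen_of_bounded_cuts. intros u Hu. apply Hcond, cut_term_shape, Hu.
Qed.
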